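(* If $G$ is a graph, then $D(G)=n(G)-1$ if and only if $G$ is isomorphic to one of $C_4$, $2K_2$, $K_{t,1}$ (for some $t\ge 2$), or $K_t\cup K_1$ (for some $t\ge 2$).
   Context: All graphs are finite and simple; $n(G)=|V(G)|$; $C_4$ is the 4-cycle, $K_{s,t}$ the complete bipartite graph, $G\cup H$ the disjoint union and $2K_2=K_2\cup K_2$. A distinguishing coloring of a graph $G$ is a (not necessarily proper) vertex coloring such that the only automorphism of $G$ mapping every vertex to a vertex of the same color is the identity; the distinguishing number $D(G)$ is the minimum number of colors in a distinguishing coloring of $G$. *)

From mathcomp Require Import all_boot all_fingroup.
Set Implicit Arguments. Unset Strict Implicit. Unset Printing Implicit Defensive.

Definition simple_graph (T : finType) (e : rel T) : Prop :=
  symmetric e /\ irreflexive e.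

Definition is_aut (T : finType) (e : rel T) (s : {perm T}) : bool :=
  [forall x, forall y, e (s x) (s y) == e x y].

Definition distinguishing (T : finType) (e : rel T) (C : eqType) (c : T -> C)
  : bool :=
  [forall s : {perm T}, (is_aut e s && [forall x, c (s x) == c x]) ==> (s == 1%g)].

Definition has_dist_col (T : finType) (e : rel T) (k : nat) : bool :=
  [exists c : {ffun T -> 'I_k}, distinguishing e c].

Lemma has_dist_col_card (T : finType) (e : rel T) :
  exists k, has_dist_col e k.
Proof.
exists #|T|; apply/existsP; exists [ffun x => enum_rank x].
apply/forallP => s; apply/implyP => /andP [_ /forallP H].
apply/eqP/permP => x; rewrite perm1.
by move: (H x); rewrite !ffunE => /eqP /enum_rank_inj.
Qed.

Definition dist_number (T : finType) (e : rel T) : nat :=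
  ex_minn (has_dist_col_card e).

Definition isomorphic (T1 T2 : finType) (e1 : rel T1) (e2 : rel T2) : Prop :=
  exists f : T1 -> T2, bijective f /\ forall x y, e2 (f x) (f y) = e1 x y.

Definition C4 : rel 'I_4 :=
  fun i j => ((i + 1) %% 4 == j) || ((j + 1) %% 4 == i).
(* 2K_2 on vertices 0..3 with edges {0,1},{2,3}. *)
Definition twoK2 : rel 'I_4 :=
  fun i j => (i != j) && (i./2 == j./2).
Definition Kt1 (t : nat) : rel 'I_t.+1 :=
  fun i j => (i != j) && ((val i == 0) || (val j == 0)).
Definition KtK1 (t : nat) : rel 'I_t.+1 :=
  fun i j => [&& i != j, val i != 0 & val j != 0].
Arguments Kt1 t : clear implicits.
Arguments KtK1 t : clear implicits.

From mathcomp Require Import all_boot all_fingroup zify.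
Set Implicit Arguments. Unset Strict Implicit. Unset Printing Implicit Defensive.

(* Call u and v twins when they have the same neighbours outside {u, v};
   transposing twins is an automorphism. Colouring u and v alike and every
   other vertex privately uses n - 1 colours and is distinguishing unless u and
   v are twins, so D(G) <= n - 1 exactly when some pair is not twins.
   If moreover D(G) > n - 2, every colouring with n - 2 colours is preserved by
   a nontrivial automorphism. Applied to the colouring merging a triple, this
   shows that two vertices of any triple are twins; applied to the colouring
   merging two disjoint non-twin pairs, it gives an automorphism exchanging
   both pairs. So there are exactly two twin classes and adjacency of distinct
   vertices depends only on their classes. Either one class is a single vertex
   (K_{t,1} or K_t + K_1), or the exchange of two pairs forces both classes to
   have two vertices and equal inner adjacency (C_4 or 2K_2). Conversely the
   four graphs are checked directly, D being invariant under isomorphism. *)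

(** * Twins *)

Section Twins.
Variables (T : finType) (e : rel T).
Hypotheses (e_sym : symmetric e) (e_irr : irreflexive e).

Definition twins (u v : T) : bool :=
  [forall w, (w != u) ==> (w != v) ==> (e u w == e v w)].

Lemma twinsP u v :
  reflect (forall w, w != u -> w != v -> e u w = e v w) (twins u v).
Proof.
apply: (iffP forallP) => [uv w wu wv | uv w].
  by move: (uv w); rewrite wu wv => /eqP.
by apply/implyP => wu; apply/implyP => wv; rewrite uv.
Qed.

Lemma twinsxx u : twins u u.
Proof. exact/twinsP. Qed.

Lemma twinsC u v : twins u v = twins v u.
Proof. by apply/twinsP/twinsP => uv w wv wu; rewrite uv. Qed.

Lemma non_twins_witness u v :
  ~~ twins u v -> exists w, [/\ w != u, w != v & e u w != e v w].
Proof.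
case/forallPn=> w; rewrite !negb_imply => /and3P[wu wv euv].
by exists w.
Qed.

Lemma twins_trans u v w : twins u v -> twins v w -> twins u w.
Proof.
move=> /twinsP uv /twinsP vw; apply/twinsP => z zu zw.
have [vu | vu] := eqVneq v u; first by subst v; apply: vw.
have [vw' | vw'] := eqVneq v w; first by subst v; apply: uv.
have [uw | uw] := eqVneq u w; first by rewrite uw.
have [-> | zv] := eqVneq z v; last by rewrite uv ?vw.
have vuw : e v u = e w u by apply: (vw u); rewrite // eq_sym.
have uvw : e u w = e v w by apply: (uv w); rewrite eq_sym.
by rewrite e_sym vuw e_sym uvw e_sym.
Qed.

Lemma twins_edge x x' y y' :
  twins x x' -> twins y y' -> x != y -> x' != y' -> e x y = e x' y'.
Proof.
move=> /twinsP xx' /twinsP yy' xy x'y'.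
have [x'_y | x'y] := eqVneq x' y; last first.
  have exy : e x y = e x' y by apply: (xx' y); rewrite eq_sym.
  have eyx' : e y x' = e y' x' := yy' x' x'y x'y'.
  by rewrite exy e_sym eyx' e_sym.
subst x'; have [-> | y'x] := eqVneq y' x; first exact: e_sym.
have eyx : e y x = e y' x by apply: (yy' x); rewrite // eq_sym.
have exy' : e x y' = e y y' by apply: (xx' y'); rewrite // eq_sym.
by rewrite e_sym eyx e_sym exy'.
Qed.

Lemma is_autP (s : {perm T}) :
  reflect (forall x y, e (s x) (s y) = e x y) (is_aut e s).
Proof.
apply: (iffP forallP) => [aut x y | aut x]; first exact/eqP/(forallP (aut x)).
by apply/forallP => y; rewrite aut.
Qed.

Lemma twins_tperm_aut u v : twins u v -> is_aut e (tperm u v).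
Proof.
move=> /twinsP uv; apply/is_autP => x y.
case: tpermP => [->|->|/eqP xu /eqP xv]; case: tpermP => [->|->|/eqP yu /eqP yv];
  rewrite ?e_irr ?(e_sym v u) //.
- by rewrite uv.
- by rewrite uv.
- by rewrite !(e_sym x) uv.
- by rewrite !(e_sym x) uv.
Qed.

Lemma small_support_aut_twins (S : seq T) (s : {perm T}) :
  size S <= 3 -> is_aut e s -> (forall w, w \notin S -> s w = w) ->
  forall x, twins x (s x).
Proof.
move=> S3 /is_autP s_aut s_fix x.
have [-> | sx_x] := eqVneq (s x) x; first exact: twinsxx.
have inS w : s w != w -> w \in S.
  by apply: contraR => wS; rewrite s_fix.
have s_moved w : s w != w -> s (s w) != s w by rewrite (inj_eq perm_inj).
apply/twinsP => w wx wsx.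
have [wS | wS] := boolP (w \in S); last by rewrite -s_aut (s_fix w).
have S_eq v : v \in S -> [|| v == x, v == s x | v == w].
  move=> vS; apply/negPn/negP; rewrite !negb_or => /and3P[vx vsx vw].
  have : size [:: v; w; s x; x] <= size S.
    apply: uniq_leq_size; first by rewrite /= !inE !negb_or vx vsx vw wx wsx sx_x.
    move=> u; rewrite !inE => /or4P[] /eqP-> //; last exact: inS.
    exact/inS/s_moved.
  by move/leq_trans/(_ S3).
have [sw_w | sw_w] := eqVneq (s w) w; first by rewrite -s_aut sw_w.
have sw : s w = x.
  case/or3P: (S_eq _ (inS _ (s_moved _ sw_w))) => /eqP sw //.
    by move/perm_inj: sw => wx'; rewrite wx' eqxx in wx.
  by rewrite sw eqxx in sw_w.
have ssx : s (s x) = w.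
  have ssx_moved := s_moved _ (s_moved _ sx_x).
  case/or3P: (S_eq _ (inS _ ssx_moved)) => /eqP ssx //.
    by move/perm_inj: (etrans ssx (esym sw)) => sxw; rewrite sxw eqxx in wsx.
  by move: (s_moved _ sx_x); rewrite ssx eqxx.
by rewrite -(s_aut (s x) w) ssx sw e_sym.
Qed.

Lemma aut_pair_support (s : {perm T}) u v :
  is_aut e s -> (forall w, w != u -> w != v -> s w = w) -> ~~ twins u v ->
  forall x, s x = x.
Proof.
move=> s_aut s_fix uv.
have fixed_end u' v' : (forall w, w != u' -> w != v' -> s w = w) ->
    ~~ twins u' v' -> s u' = u'.
  move=> s_fix' u'v'; have [// | su_u] := eqVneq (s u') u'.
  have : twins u' (s u').
    apply: (small_support_aut_twins (S := [:: u'; v'])) => // w.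
    by rewrite !inE negb_or => /andP[]; apply: s_fix'.
  have [-> | su_v] := eqVneq (s u') v'; first by rewrite (negbTE u'v').
  by move=> _; apply: perm_inj; apply: s_fix'.
have su := fixed_end _ _ s_fix uv.
have sv : s v = v.
  by apply: (fixed_end _ u); [move=> w wv wu; apply: s_fix | rewrite twinsC].
move=> x; have [-> // | xu] := eqVneq x u; have [-> // | xv] := eqVneq x v.
exact: s_fix.
Qed.

Lemma aut_swaps_pair (s : {perm T}) u v u' v' p :
  is_aut e s -> s p != p -> s u \in [:: u; v] -> s v \in [:: u; v] -> u != v ->
  ~~ twins u' v' ->
  (forall w, w != u -> w != v -> w != u' -> w != v' -> s w = w) -> s u = v.
Proof.
move=> s_aut moved su sv uv u'v' s_fix.
have [su_u | su_u] := eqVneq (s u) u; last first.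
  by move: su; rewrite !inE (negbTE su_u) => /eqP.
have sv_v : s v = v.
  by move: sv; rewrite !inE -{1}su_u (inj_eq perm_inj) eq_sym (negbTE uv) => /eqP.
have s_id : forall x, s x = x.
  apply: (aut_pair_support s_aut _ u'v') => w wu' wv'.
  have [-> // | wu] := eqVneq w u; have [-> // | wv] := eqVneq w v.
  exact: s_fix.
by rewrite s_id eqxx in moved.
Qed.

End Twins.

(** * Colourings and the distinguishing number *)

Section MapColoring.
Variables (T : finType) (e : rel T) (f : T -> T) (k : nat).
Hypothesis f_card : #|f @: [set: T]| <= k.

(* The colour classes of [map_coloring] are the fibres of [f]. *)
Definition map_coloring : {ffun T -> 'I_k} :=
  [ffun x => widen_ord f_card (enum_rank_in (imset_f f (in_setT x)) (f x))].

Lemma map_coloring_eq x y : map_coloring x = map_coloring y -> f x = f y.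
Proof.
rewrite !ffunE => /(congr1 val) /= /val_inj fxy.
rewrite -(enum_rankK_in (imset_f f (in_setT x)) (imset_f f (in_setT x))).
by rewrite fxy enum_rankK_in ?imset_f ?in_setT.
Qed.

Lemma has_dist_col_of_map :
  (forall s, is_aut e s -> (forall x, f (s x) = f x) -> forall x, s x = x) ->
  has_dist_col e k.
Proof.
move=> f_rigid; apply/existsP; exists map_coloring; apply/forallP => s.
apply/implyP => /andP[s_aut /forallP s_col]; apply/eqP/permP => x.
by rewrite perm1; apply: f_rigid => // y; apply/map_coloring_eq/eqP.
Qed.

Lemma map_aut_of_no_dist_col : ~~ has_dist_col e k ->
  exists s x, [/\ is_aut e s, forall y, f (s y) = f y & s x != x].
Proof.
move=> /existsPn /(_ map_coloring) /forallPn[s].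
rewrite negb_imply => /andP[/andP[s_aut /forallP s_col] s_nontriv].
have [x sx] : exists x, s x != x.
  apply/existsP; apply: contraNT s_nontriv => /existsPn s_fix.
  by apply/eqP/permP => x; rewrite perm1; apply/eqP/negPn.
by exists s, x; split=> // y; apply/map_coloring_eq/eqP.
Qed.

End MapColoring.

Lemma card_image_avoid (T : finType) (f : T -> T) (B : {set T}) :
  (forall x, f x \notin B) -> #|f @: [set: T]| <= #|T| - #|B|.
Proof.
move=> fB; rewrite -[B]setCK -cardsCs; apply/subset_leq_card/subsetP.
by move=> _ /imsetP[x _ ->]; rewrite inE.
Qed.

Lemma aut_not_distinguishing (T : finType) (e : rel T) (C : eqType) (c : T -> C)
    (s : {perm T}) x :
  is_aut e s -> (forall y, c (s y) = c y) -> s x != x -> ~~ distinguishing e c.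
Proof.
move=> s_aut s_col sx; apply/forallPn; exists s; rewrite negb_imply s_aut /=.
apply/andP; split; first by apply/forallP => y; rewrite s_col.
by apply: contra sx => /eqP->; rewrite perm1.
Qed.

Section DistinguishingNumber.
Variables (T : finType) (e : rel T).
Hypotheses (e_sym : symmetric e) (e_irr : irreflexive e).

Lemma has_dist_col_leq k k' : k <= k' -> has_dist_col e k -> has_dist_col e k'.
Proof.
move=> kk' /existsP[c c_dist]; apply/existsP; exists [ffun x => widen_ord kk' (c x)].
apply/forallP => s; apply/implyP => /andP[s_aut /forallP s_col].
apply: (implyP (forallP c_dist s)); rewrite s_aut; apply/forallP => x.
by move: (s_col x); rewrite !ffunE => /eqP/(congr1 val)/= /val_inj ->.
Qed.

Lemma no_dist_col_of_twins (S : {set T}) k :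
  {in S &, forall x y, twins e x y} -> k < #|S| -> ~~ has_dist_col e k.
Proof.
move=> S_twins ltkS; apply/existsPn => c.
case: (boolP [exists x in S, exists y in S, (x != y) && (c x == c y)]).
  case/exists_inP=> x xS /exists_inP[y yS /andP[xy /eqP cxy]].
  apply: (aut_not_distinguishing (s := tperm x y) (x := x)).
  - exact: (twins_tperm_aut e_sym e_irr (S_twins _ _ xS yS)).
  - by move=> z; case: tpermP => [->|->|].
  - by rewrite tpermL eq_sym.
move=> no_pair; have c_inj : {in S &, injective c}.
  move=> x y xS yS cxy; apply/eqP/negPn/negP => xy; case/negP: no_pair.
  by apply/exists_inP; exists x => //; apply/exists_inP; exists y; rewrite // xy cxy eqxx.
have := max_card (mem (c @: S)); rewrite card_in_imset // card_ord.
by rewrite leqNgt ltkS.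
Qed.

Lemma has_dist_col_of_non_twins u v :
  ~~ twins e u v -> has_dist_col e #|T|.-1.
Proof.
move=> uv; have u_v : u != v by apply: contraNneq uv => ->; apply: twinsxx.
pose f x := if x == v then u else x.
apply: (@has_dist_col_of_map _ _ f).
  rewrite -(cardsC1 v); apply/subset_leq_card/subsetP => _ /imsetP[x _ ->].
  by rewrite !inE /f; case: ifP => // /negbT.
move=> s s_aut s_f; apply: (aut_pair_support e_sym s_aut _ uv) => w wu wv.
move: (s_f w); rewrite /f (negbTE wv); case: ifP => // _ uw.
by rewrite uw eqxx in wu.
Qed.

Lemma exists_non_twins :
  has_dist_col e #|T|.-1 -> ~~ has_dist_col e #|T|.-2 ->
  exists u v, ~~ twins e u v.
Proof.
move=> col no_col; case: (boolP [exists u, exists v, ~~ twins e u v]).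
  by case/existsP=> u /existsP[v uv]; exists u, v.
move=> /existsPn all_twins.
have T_gt0 : 0 < #|T| by move: col no_col; case: #|T| => //= ->.
have : ~~ has_dist_col e #|T|.-1.
  apply: (no_dist_col_of_twins (S := [set: T])); last by rewrite cardsT prednK.
  by move=> u v _ _; move/existsPn: (all_twins u) => /(_ v)/negPn.
by rewrite col.
Qed.

Lemma has_dist_col0 : has_dist_col e 0 -> #|T| = 0.
Proof. by case/existsP=> c _; apply: eq_card0 => x; case: (c x). Qed.

Lemma dist_number_pred_card :
  dist_number e + 1 = #|T| <->
  has_dist_col e #|T|.-1 /\ ~~ has_dist_col e #|T|.-2.
Proof.
rewrite /dist_number; case: ex_minnP => m m_col m_min.
split=> [mT | [col no_col]].
  rewrite -mT addn1 /=; split => //.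
  case: m m_col m_min mT => [/has_dist_col0 -> // | m _ m_min _].
  by apply/negP => /m_min; rewrite ltnn.
have := m_min _ col; have : ~~ (m <= #|T|.-2).
  by apply: contra no_col => /has_dist_col_leq; apply.
lia.
Qed.

(* The colouring merging [a], [b] and [x] uses n - 2 colours; an automorphism
   preserving it moves points only inside the triple. *)
Lemma twins_in_triple a b x : ~~ has_dist_col e #|T|.-2 ->
  a != b -> a != x -> b != x -> [|| twins e a b, twins e a x | twins e b x].
Proof.
move=> no_col ab ax bx; pose f w := if w \in [:: a; b; x] then a else w.
have f_card : #|f @: [set: T]| <= #|T|.-2.
  have -> : #|T|.-2 = #|T| - #|[set b; x]| by rewrite cards2 bx subn2.
  apply: card_image_avoid => w.
  rewrite /f !inE; case: ifP => [_ | /negbT]; first by rewrite negb_or ab ax.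
  by rewrite !negb_or => /and3P[_ -> ->].
have [s [p [s_aut s_f moved]]] := map_aut_of_no_dist_col f_card no_col.
have s_fix w : w \notin [:: a; b; x] -> s w = w.
  move=> wS; move: (s_f w); rewrite /f (negbTE wS); case: ifP => // _ aw.
  by rewrite -aw !inE eqxx in wS.
have pS : p \in [:: a; b; x] by apply: contraR moved => /s_fix/eqP.
have spS : s p \in [:: a; b; x].
  move: (s_f p); rewrite /f pS; case: ifP => // /negbT spS spa.
  by rewrite spa !inE eqxx in spS.
have := small_support_aut_twins e_sym (S := [:: a; b; x]) isT s_aut s_fix p.
move: moved; rewrite !inE in pS spS.
case/or3P: spS => /eqP->; case/or3P: pS => /eqP-> //; rewrite ?eqxx // => _;
  by rewrite ?(twinsC _ b a) ?(twinsC _ x a) ?(twinsC _ x b) => ->; rewrite ?orbT.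
Qed.

Lemma twin_classes a b : ~~ has_dist_col e #|T|.-2 -> ~~ twins e a b ->
  forall x, twins e a x || twins e b x.
Proof.
move=> no_col ab x; have [-> | xa] := eqVneq x a; first by rewrite twinsxx.
have [-> | xb] := eqVneq x b; first by rewrite twinsxx orbT.
have a_b : a != b by apply: contraNneq ab => ->; apply: twinsxx.
have ax : a != x by rewrite eq_sym.
have bx : b != x by rewrite eq_sym.
case/or3P: (twins_in_triple no_col a_b ax bx) => [ab' | -> | ->] //.
  by rewrite ab' in ab.
by rewrite orbT.
Qed.

(* Likewise with the colouring merging [a] with [b] and [c] with [d]. *)
Lemma aut_swap_pairs a b c d : ~~ has_dist_col e #|T|.-2 ->
  [&& a != c, a != d, b != c & b != d] -> ~~ twins e a b -> ~~ twins e c d ->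
  exists s, [/\ is_aut e s, s a = b, s c = d &
    forall w, w != a -> w != b -> w != c -> w != d -> s w = w].
Proof.
move=> no_col /and4P[ac ad bc bd] ab cd.
have [a_b c_d] : a != b /\ c != d.
  by split; [apply: contraNneq ab => -> | apply: contraNneq cd => ->]; apply: twinsxx.
pose f w := if w \in [:: a; b] then a else if w \in [:: c; d] then c else w.
have f_card : #|f @: [set: T]| <= #|T|.-2.
  have -> : #|T|.-2 = #|T| - #|[set b; d]| by rewrite cards2 bd subn2.
  apply: card_image_avoid => w.
  rewrite /f !inE; case: ifP => [_ | /negbT wab]; first by rewrite negb_or a_b ad.
  case: ifP => [_ | /negbT wcd]; first by rewrite negb_or eq_sym bc c_d.
  by move: wab wcd; rewrite !negb_or => /andP[_ ->] /andP[_ ->].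
have [s [p [s_aut s_f moved]]] := map_aut_of_no_dist_col f_card no_col.
have s_ab w : w \in [:: a; b] -> s w \in [:: a; b].
  move=> wab; move: (s_f w); rewrite /f wab.
  have [// | sw_ab] := boolP (s w \in [:: a; b]).
  case: ifP => [_ ca | _ swa]; first by rewrite ca eqxx in ac.
  by rewrite swa !inE eqxx in sw_ab.
have s_cd w : w \in [:: c; d] -> s w \in [:: c; d].
  move=> wcd; have wab : w \notin [:: a; b].
    move: wcd; rewrite !inE => /orP[] /eqP->; rewrite !negb_or.
      by rewrite (eq_sym c a) (eq_sym c b) ac bc.
    by rewrite (eq_sym d a) (eq_sym d b) ad bd.
  move: (s_f w); rewrite /f (negbTE wab) wcd.
  have [// | sw_cd] := boolP (s w \in [:: c; d]).
  case: ifP => [_ ac' | _ swc]; first by rewrite ac' eqxx in ac.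
  by rewrite swc !inE eqxx in sw_cd.
have s_fix w : w != a -> w != b -> w != c -> w != d -> s w = w.
  move=> wa wb wc wd; move: (s_f w); rewrite /f !inE (negbTE wa) (negbTE wb).
  rewrite (negbTE wc) (negbTE wd) /=.
  case: ifP => [_ aw | _]; first by rewrite aw eqxx in wa.
  by case: ifP => // _ cw; rewrite cw eqxx in wc.
exists s; split => //.
  apply: (aut_swaps_pair e_sym s_aut moved _ _ a_b cd s_fix);
  by apply: s_ab; rewrite !inE eqxx ?orbT.
apply: (aut_swaps_pair e_sym s_aut moved _ _ c_d ab);
  try by apply: s_cd; rewrite !inE eqxx ?orbT.
by move=> w wc wd wa wb; apply: s_fix.
Qed.

End DistinguishingNumber.

Section Isomorphism.
Variables (T1 T2 : finType) (e1 : rel T1) (e2 : rel T2).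

Lemma isomorphic_sym : isomorphic e1 e2 -> isomorphic e2 e1.
Proof.
case=> f [[g fK gK] ef]; exists g; split; first by exists f.
by move=> x y; rewrite -ef !gK.
Qed.

Lemma card_isomorphic : isomorphic e1 e2 -> #|T1| = #|T2|.
Proof. by case=> f [f_bij _]; apply: bij_eq_card f_bij. Qed.

Lemma has_dist_col_isomorphic k :
  isomorphic e1 e2 -> has_dist_col e2 k -> has_dist_col e1 k.
Proof.
case=> f [[g fK gK] ef] /existsP[c /forallP c_dist].
apply/existsP; exists [ffun x => c (f x)]; apply/forallP => s.
apply/implyP => /andP[/is_autP s_aut /forallP s_col].
have t_inj : injective (fun y => f (s (g y))).
  by move=> y y' /(can_inj fK)/perm_inj/(can_inj gK).
pose t := perm t_inj; have tE y : t y = f (s (g y)) by rewrite permE.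
have /eqP t1 : t == 1%g.
  apply: (implyP (c_dist t)); apply/andP; split.
    by apply/is_autP => x y; rewrite !tE ef s_aut -ef !gK.
  by apply/forallP => y; rewrite tE; move: (s_col (g y)); rewrite !ffunE gK.
apply/eqP/permP => x; rewrite perm1; apply: (can_inj fK).
by move/permP/(_ (f x)): t1; rewrite tE fK perm1.
Qed.

End Isomorphism.

Lemma dist_number_isomorphic (T1 T2 : finType) (e1 : rel T1) (e2 : rel T2) :
  isomorphic e1 e2 -> dist_number e1 = dist_number e2.
Proof.
move=> iso; apply: eq_ex_minn => k; apply/idP/idP.
  exact: has_dist_col_isomorphic (isomorphic_sym iso).
exact: has_dist_col_isomorphic iso.
Qed.

(** * Graphs with two twin classes *)

(* K_{t,1} and K_t + K_1 have this form with [P] a single vertex, C_4 and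
   2K_2 with two vertices on each side. *)
Definition two_class (T : finType) (e : rel T) (P : pred T) (cin cout : bool) :=
  forall x y, e x y = (x != y) && (if P x == P y then cin else cout).

Lemma pred_neq (T : eqType) (P : pred T) x y : P x -> ~~ P y -> x != y.
Proof. by move=> Px; apply: contraNneq => <-. Qed.

Lemma ord2_cases (a b x : 'I_2) : a != b -> (x == a) || (x == b).
Proof. by move: a b x; do 3!case=> [[|[|?]] ?]. Qed.

Lemma two_class_C4 : two_class C4 (fun i => ~~ odd i) false true.
Proof. by do 2!case=> [[|[|[|[|?]]]] ?]. Qed.

Lemma two_class_twoK2 : two_class twoK2 (fun i => i < 2) true false.
Proof. by do 2!case=> [[|[|[|[|?]]]] ?]. Qed.

Lemma two_class_Kt1 t : two_class (Kt1 t) (fun i => val i == 0) false true.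
Proof.
move=> i j; rewrite /Kt1; case: (val i =P 0) => i0; case: (val j =P 0) => j0 //=.
by rewrite andbT (_ : i = j) ?eqxx //; apply: ord_inj; rewrite i0 j0.
Qed.

Lemma two_class_KtK1 t : two_class (KtK1 t) (fun i => val i == 0) true false.
Proof.
move=> i j; rewrite /KtK1; case: (val i =P 0) => i0; case: (val j =P 0) => j0 //=.
by rewrite (_ : i = j) ?eqxx //; apply: ord_inj; rewrite i0 j0.
Qed.

Lemma nth_bijective (T : finType) (x0 : T) (s : seq T) :
  uniq s -> (forall x, x \in s) -> bijective (fun i : 'I_(size s) => nth x0 s i).
Proof.
move=> s_uniq s_cover; apply: inj_card_bij.
  by move=> i j /eqP; rewrite nth_uniq // => /eqP/ord_inj.
rewrite card_ord -(card_uniqP s_uniq); apply/subset_leq_card/subsetP => x _.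
exact: s_cover.
Qed.

Section TwoClass.
Variables (T : finType) (e : rel T) (P : pred T) (cin cout : bool).
Hypothesis e_two : two_class e P cin cout.

Lemma two_class_sym : symmetric e.
Proof. by move=> x y; rewrite !e_two eq_sym [P y == _]eq_sym. Qed.

Lemma two_class_irr : irreflexive e.
Proof. by move=> x; rewrite e_two eqxx. Qed.

Lemma two_class_twins x y : P x = P y -> twins e x y.
Proof.
move=> Pxy; apply/twinsP => w wx wy.
by rewrite !e_two Pxy (eq_sym x) wx (eq_sym y) wy.
Qed.

Lemma two_class_non_twins x y w : cin != cout -> P x != P y ->
  w != x -> w != y -> ~~ twins e x y.
Proof.
move=> cc Pxy wx wy; apply/negP => /twinsP/(_ w wx wy).
rewrite !e_two (eq_sym x) wx (eq_sym y) wy /=.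
by move: cc Pxy; case: (P x); case: (P y); case: (P w); case: cin; case: cout.
Qed.

Lemma two_class_nontrivial x y : ~~ twins e x y -> cin != cout.
Proof.
apply: contraNneq => cc; apply/twinsP => w wx wy.
by rewrite !e_two cc !if_same (eq_sym x) wx (eq_sym y) wy.
Qed.

Lemma two_class_aut (s : {perm T}) : (forall x, P (s x) = ~~ P x) -> is_aut e s.
Proof.
move=> sP; apply/is_autP => x y; rewrite !e_two !sP (inj_eq perm_inj).
by case: (P x); case: (P y).
Qed.

Lemma isomorphic_two_class (T' : finType) (e' : rel T') (Q : pred T') (g : T' -> T) :
  bijective g -> two_class e' Q cin cout -> (forall i, P (g i) = Q i) ->
  isomorphic e e'.
Proof.
case=> f gK fK e'_two PQ; exists f; split; first by exists g.
by move=> x y; rewrite e'_two e_two -!PQ !fK (can_eq fK).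
Qed.

Lemma isomorphic_two_class_single v u w : cin != cout ->
  (forall x, P x = (x == v)) -> u != v -> w != v -> u != w ->
  (exists2 t, 2 <= t & isomorphic e (Kt1 t)) \/
  (exists2 t, 2 <= t & isomorphic e (KtK1 t)).
Proof.
move=> cc Pv uv wv uw; pose s := v :: enum [set~ v].
have s_uniq : uniq s by rewrite /= mem_enum !inE eqxx enum_uniq.
have s_cover x : x \in s by rewrite inE mem_enum !inE; case: eqP.
have g_bij := nth_bijective v s_uniq s_cover.
have t2 : 2 <= size (enum [set~ v]).
  by rewrite -cardE; apply/card_gt1P; exists u, w; rewrite !inE uv wv.
have Pg (i : 'I_(size s)) : P (nth v s i) = (val i == 0).
  by rewrite Pv; move: (inj_eq (bij_inj g_bij) i ord0) => /= ->.
have cout_cin : cout = ~~ cin by move: cc; case: cin; case: cout.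
case cin_val: cin cout_cin => cout_val.
  right; exists (size (enum [set~ v])) => //; apply: isomorphic_two_class g_bij _ Pg.
  by rewrite cin_val cout_val; apply: two_class_KtK1.
left; exists (size (enum [set~ v])) => //; apply: isomorphic_two_class g_bij _ Pg.
by rewrite cin_val cout_val; apply: two_class_Kt1.
Qed.

Lemma isomorphic_two_class_quad p p' q q' : cin != cout ->
  P p -> P p' -> ~~ P q -> ~~ P q' -> p != p' -> q != q' ->
  (forall x, x \in [:: p; p'; q; q']) -> isomorphic e C4 \/ isomorphic e twoK2.
Proof.
move=> cc Pp Pp' Nq Nq' pp' qq' cover.
have [pq pq' p'q p'q'] : [/\ p != q, p != q', p' != q & p' != q'].
  by split; apply: (pred_neq (P := P)).
have cout_cin : cout = ~~ cin by move: cc; case: cin; case: cout.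
case cin_val: cin cout_cin => cout_val.
  right; have s_uniq : uniq [:: p; p'; q; q'].
    by rewrite /= !inE !negb_or pp' pq pq' p'q p'q' qq'.
  apply: isomorphic_two_class (nth_bijective p s_uniq cover) _ _.
    by rewrite cin_val cout_val; apply: two_class_twoK2.
  by case=> [[|[|[|[|?]]]] ?] //=; rewrite ?Pp ?Pp' ?(negbTE Nq) ?(negbTE Nq').
left; have s_uniq : uniq [:: p; q; p'; q'].
  by rewrite /= !inE !negb_or pq pp' pq' (eq_sym q) p'q qq' p'q'.
have s_cover x : x \in [:: p; q; p'; q'].
  by move: (cover x); rewrite !inE => /or4P[] ->; rewrite ?orbT.
apply: isomorphic_two_class (nth_bijective p s_uniq s_cover) _ _.
  by rewrite cin_val cout_val; apply: two_class_C4.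
by case=> [[|[|[|[|?]]]] ?] //=; rewrite ?Pp ?Pp' ?(negbTE Nq) ?(negbTE Nq').
Qed.

Lemma dist_number_two_class_single v u w : cin != cout ->
  (forall x, P x = (x == v)) -> u != v -> w != v -> u != w ->
  dist_number e + 1 = #|T|.
Proof.
move=> cc Pv uv wv uw; apply/dist_number_pred_card; split.
  apply: (has_dist_col_of_non_twins two_class_sym (u := v) (v := u)).
  apply: (two_class_non_twins (w := w)) => //; last by rewrite eq_sym.
  by rewrite !Pv eqxx (negbTE uv).
apply: (no_dist_col_of_twins two_class_sym two_class_irr (S := [set~ v])).
  move=> x y; rewrite !inE => xv yv.
  by apply: two_class_twins; rewrite !Pv (negbTE xv) (negbTE yv).
have : 1 < #|[set~ v]| by apply/card_gt1P; exists u, w; rewrite !inE uv wv.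
by rewrite cardsC1; lia.
Qed.

Lemma no_dist_col2_two_class p p' q q' :
  P p -> P p' -> ~~ P q -> ~~ P q' -> p != p' -> q != q' ->
  (forall x, x \in [:: p; p'; q; q']) -> ~~ has_dist_col e 2.
Proof.
move=> Pp Pp' Nq Nq' pp' qq' cover; apply/existsPn => c.
have e_sym := two_class_sym; have e_irr := two_class_irr.
have [cp | cp] := eqVneq (c p) (c p').
  apply: (aut_not_distinguishing (s := tperm p p') (x := p)).
  - by apply: twins_tperm_aut => //; apply: two_class_twins; rewrite Pp Pp'.
  - by move=> y; case: tpermP => [->|->|].
  - by rewrite tpermL eq_sym.
have [cq | cq] := eqVneq (c q) (c q').
  apply: (aut_not_distinguishing (s := tperm q q') (x := q)).
  - apply: twins_tperm_aut => //.
    by apply: two_class_twins; rewrite (negbTE Nq) (negbTE Nq').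
  - by move=> y; case: tpermP => [->|->|].
  - by rewrite tpermL eq_sym.
(* Both pairs are now bichromatic, so [c] is preserved by exchanging [p]
   with [q] and [p'] with [q'], after possibly renaming [q] and [q']. *)
wlog cqp : q q' Nq Nq' qq' cover cq / c q = c p.
  move=> wlog_hyp; case/orP: (ord2_cases (c q) cp) => /eqP cqp.
    exact: (wlog_hyp q q').
  apply: (wlog_hyp q' q) => //.
  - by rewrite eq_sym.
  - by move=> x; move: (cover x); rewrite !inE => /or4P[] ->; rewrite ?orbT.
  - by rewrite eq_sym.
  - by case/orP: (ord2_cases (c q') cp) => /eqP // cq'p'; rewrite cq'p' -cqp eqxx in cq.
have cq'p' : c q' = c p'.
  by case/orP: (ord2_cases (c q') cp) => /eqP // cq'p; rewrite cq'p -cqp eqxx in cq.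
have [pq pq' p'q p'q'] : [/\ p != q, p != q', p' != q & p' != q'].
  by split; apply: (pred_neq (P := P)).
pose s := (tperm p q * tperm p' q')%g.
have sp : s p = q by rewrite permM tpermL tpermD // eq_sym.
have sp' : s p' = q' by rewrite permM (tpermD (_ : p != p')) ?tpermL // eq_sym.
have sq : s q = p by rewrite permM tpermR tpermD // eq_sym.
have sq' : s q' = p' by rewrite permM (tpermD pq') ?tpermR // eq_sym.
apply: (aut_not_distinguishing (s := s) (x := p)); last by rewrite sp eq_sym.
  apply: two_class_aut => y; move: (cover y); rewrite !inE => /or4P[] /eqP->;
  by rewrite ?sp ?sp' ?sq ?sq' ?Pp ?Pp' ?(negbTE Nq) ?(negbTE Nq').
by move=> y; move: (cover y); rewrite !inE => /or4P[] /eqP->; rewrite ?sp ?sp' ?sq ?sq'.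
Qed.

Lemma dist_number_two_class_quad p p' q q' : cin != cout ->
  P p -> P p' -> ~~ P q -> ~~ P q' -> p != p' -> q != q' ->
  (forall x, x \in [:: p; p'; q; q']) -> dist_number e + 1 = #|T|.
Proof.
move=> cc Pp Pp' Nq Nq' pp' qq' cover.
have T4 : #|T| = 4.
  have -> : #|T| = #|[:: p; p'; q; q']| by apply: eq_card => x; rewrite cover.
  apply/card_uniqP; rewrite /= !inE !negb_or pp' qq' !(pred_neq (P := P)) //=.
apply/dist_number_pred_card; rewrite T4; split.
  rewrite -T4; apply: (has_dist_col_of_non_twins two_class_sym (u := p) (v := q)).
  apply: (two_class_non_twins (w := p')) => //; last exact: (pred_neq (P := P)).
    by rewrite Pp (negbTE Nq).
  by rewrite eq_sym.
exact: (no_dist_col2_two_class Pp Pp' Nq Nq').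
Qed.

End TwoClass.

Lemma dist_number_C4 : dist_number C4 + 1 = #|'I_4|.
Proof.
apply: (dist_number_two_class_quad two_class_C4 (p := ord0)
  (p' := Ordinal (isT : 2 < 4)) (q := Ordinal (isT : 1 < 4))
  (q' := Ordinal (isT : 3 < 4))) => //.
by case=> [[|[|[|[|?]]]] ?].
Qed.

Lemma dist_number_twoK2 : dist_number twoK2 + 1 = #|'I_4|.
Proof.
apply: (dist_number_two_class_quad two_class_twoK2 (p := ord0)
  (p' := Ordinal (isT : 1 < 4)) (q := Ordinal (isT : 2 < 4))
  (q' := Ordinal (isT : 3 < 4))) => //.
by case=> [[|[|[|[|?]]]] ?].
Qed.

Lemma dist_number_Kt1 t : 2 <= t -> dist_number (Kt1 t) + 1 = #|'I_t.+1|.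
Proof.
move=> t2; exact: (dist_number_two_class_single (@two_class_Kt1 t) (v := ord0)
  (u := Ordinal (ltnW t2 : 1 < t.+1)) (w := Ordinal (t2 : 2 < t.+1))).
Qed.

Lemma dist_number_KtK1 t : 2 <= t -> dist_number (KtK1 t) + 1 = #|'I_t.+1|.
Proof.
move=> t2; exact: (dist_number_two_class_single (@two_class_KtK1 t) (v := ord0)
  (u := Ordinal (ltnW t2 : 1 < t.+1)) (w := Ordinal (t2 : 2 < t.+1))).
Qed.

(** * Classification *)

Section Classification.
Variables (T : finType) (e : rel T).
Hypotheses (e_sym : symmetric e) (e_irr : irreflexive e).

Lemma isomorphic_star v u : ~~ twins e v u ->
  (forall x, x != v -> twins e u x) ->
  (exists2 t, 2 <= t & isomorphic e (Kt1 t)) \/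
  (exists2 t, 2 <= t & isomorphic e (KtK1 t)).
Proof.
move=> vu u_twins; have [w [wv wu _]] := non_twins_witness vu.
have rest_twins x y : x != v -> y != v -> twins e x y.
  by move=> xv yv; apply: (twins_trans e_sym _ (u_twins y yv)); rewrite twinsC u_twins.
have uv : u != v by apply: contraNneq vu => ->; apply: twinsxx.
have e_two : two_class e (pred1 v) (e u w) (e v u).
  move=> x y; have [<- | xy] := eqVneq x y; first by rewrite e_irr.
  rewrite /=; have [xv | xv] := eqVneq x v.
    subst x; rewrite (eq_sym y v) (negbTE xy) /=.
    have yv : y != v by rewrite eq_sym.
    by apply: (twins_edge e_sym (twinsxx _ v) (rest_twins _ _ yv uv)); rewrite eq_sym.
  have [yv | yv] := eqVneq y v.
    subst y; rewrite /= e_sym.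
    by apply: (twins_edge e_sym (twinsxx _ v) (rest_twins _ _ xv uv)); rewrite eq_sym.
  apply: (twins_edge e_sym (rest_twins _ _ xv uv) (rest_twins _ _ yv wv)) => //.
  by rewrite eq_sym.
have cc := two_class_nontrivial e_two vu.
by apply: (isomorphic_two_class_single e_two (u := u) (w := w) cc); rewrite // eq_sym.
Qed.

Lemma two_class_of_twin_classes (P : pred T) a a' b b' :
  (forall x, P x -> twins e x a) -> (forall x, ~~ P x -> twins e x b) ->
  P a -> P a' -> ~~ P b -> ~~ P b' -> a != a' -> b != b' ->
  e b b' = e a a' -> two_class e P (e a a') (e a b).
Proof.
move=> twA twB Pa Pa' Nb Nb' a_a' b_b' ebb'.
have ab := pred_neq Pa Nb.
move=> x y; have [<- | xy] := eqVneq x y; first by rewrite e_irr.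
case Px: (P x); case Py: (P y) => /=.
- have ya' : twins e y a' by apply: twins_trans (twA y Py) _; rewrite // twinsC twA.
  exact: (twins_edge e_sym (twA x Px) ya' xy a_a').
- exact: (twins_edge e_sym (twA x Px) (twB y (negbT Py)) xy ab).
- rewrite e_sym; apply: (twins_edge e_sym (twA y Py) (twB x (negbT Px)) _ ab).
  by rewrite eq_sym.
- have yb' : twins e y b'.
    by apply: twins_trans (twB y (negbT Py)) _; rewrite // twinsC twB.
  by rewrite (twins_edge e_sym (twB x (negbT Px)) yb' xy b_b').
Qed.

Lemma isomorphic_quad a a' b b' : ~~ has_dist_col e #|T|.-2 ->
  ~~ twins e a b -> twins e a a' -> twins e b b' -> a != a' -> b != b' ->
  (forall x, twins e a x || twins e b x) ->
  isomorphic e C4 \/ isomorphic e twoK2.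
Proof.
move=> no_col ab aa' bb' a_a' b_b' classes; pose P := twins e a.
have twA x : P x -> twins e x a by rewrite /P twinsC.
have twB x : ~~ P x -> twins e x b.
  by move=> Px; move: (classes x); rewrite -/(P x) (negbTE Px) twinsC.
have Pa : P a := twinsxx e a.
have Nb : ~~ P b := ab.
have Nb' : ~~ P b' by apply: contra ab => /twins_trans; apply; rewrite // twinsC.
have a'b' : ~~ twins e a' b'.
  apply: contra ab => a'b'; apply: twins_trans aa' _ => //.
  by apply: twins_trans a'b' _; rewrite // twinsC.
have distinct : [&& a != a', a != b', b != a' & b != b'].
  by rewrite a_a' b_b' (pred_neq Pa Nb') eq_sym (pred_neq aa' ab).
have [s [s_aut sa sa' s_fix]] := aut_swap_pairs e_sym no_col distinct ab a'b'.
have ebb' : e b b' = e a a' by rewrite -sa -sa' (is_autP _ _ s_aut).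
have e_two := two_class_of_twin_classes twA twB Pa aa' Nb Nb' a_a' b_b' ebb'.
have cc := two_class_nontrivial e_two ab.
(* A fifth vertex x would be fixed by s, so e b x = e a x across the classes. *)
apply: (isomorphic_two_class_quad e_two cc Pa aa' Nb Nb' a_a' b_b') => x.
apply/negPn/negP; rewrite !inE !negb_or => /and4P[xa xa' xb xb'].
move: (is_autP _ _ s_aut a x); rewrite sa (s_fix x xa xb xa' xb') (e_two b x) (e_two a x).
rewrite (eq_sym b x) xb (eq_sym a x) xa Pa (negbTE Nb) /=.
by case: (P x) => /eqP; rewrite ?(negbTE cc) // eq_sym (negbTE cc).
Qed.

End Classification.

Theorem theorem4p2 (T : finType) (e : rel T) :
  simple_graph e ->
  ((dist_number e + 1)%N = #|T| <->
   [\/ isomorphic e C4,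
       isomorphic e twoK2,
       exists2 t, (2 <= t)%N & isomorphic e (Kt1 t)
     | exists2 t, (2 <= t)%N & isomorphic e (KtK1 t)]).
Proof.
case=> e_sym e_irr; split=> [/dist_number_pred_card[col no_col] | iso]; last first.
  case: iso => [iso | iso | [t t2 iso] | [t t2 iso]];
    rewrite (dist_number_isomorphic iso) (card_isomorphic iso).
  - exact: dist_number_C4.
  - exact: dist_number_twoK2.
  - exact: dist_number_Kt1.
  - exact: dist_number_KtK1.
have [a [b ab]] := exists_non_twins e_sym e_irr col no_col.
have classes := twin_classes e_sym no_col ab.
have star v u : ~~ twins e v u -> (forall x, x != v -> twins e u x) ->
    [\/ isomorphic e C4, isomorphic e twoK2,
        exists2 t, 2 <= t & isomorphic e (Kt1 t)
      | exists2 t, 2 <= t & isomorphic e (KtK1 t)].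
  by move=> vu u_twins; case: (isomorphic_star e_sym e_irr vu u_twins) => ?;
    [constructor 3 | constructor 4].
case: (pickP (fun x => (x != b) && twins e b x)) => [b' /andP[b'b bb'] | no_b'].
  case: (pickP (fun x => (x != a) && twins e a x)) => [a' /andP[a'a aa'] | no_a'].
    rewrite eq_sym in a'a; rewrite eq_sym in b'b.
    by case: (isomorphic_quad e_sym e_irr no_col ab aa' bb' a'a b'b classes) => ?;
      [constructor 1 | constructor 2].
  apply: (star a b ab) => x xa; move: (classes x) (no_a' x); rewrite xa /=.
  by move=> /orP[-> | ->].
apply: (star b a); first by rewrite twinsC.
by move=> x xb; move: (classes x) (no_b' x); rewrite xb /= => /orP[-> | ->].
Qed.
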